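(* For $k\ge4$, $\Phi_k(2^{k-1}k\log2,\,x)<0$ for all $x\in[\frac12-\frac1{2^k},\frac12]$.
   Context: $\Phi_k(d,x)=-\log(1-x)-d(1-k^{-1}-d^{-1})\log(1-2x^k)+(d-1)\log(1-x^{k-1})$. *)

From Stdlib Require Import Reals.
Open Scope R_scope.

Definition Phi (k : nat) (d x : R) : R :=
  - ln (1 - x)
  - d * (1 - / INR k - / d) * ln (1 - 2 * x ^ k)
  + (d - 1) * ln (1 - x ^ (k - 1)).

From Stdlib Require Import Reals Lra Lia Psatz.
From Coquelicot Require Import Rcomplements.
Open Scope R_scope.

(* Write x = (1 - e)/2 with 0 <= e <= 2^(1-k); then x^(k-1) = (1-e)^(k-1)/2^(k-1),
   2x^k = (1-e)^k/2^(k-1) and -ln(1-x) = ln 2 - ln(1+e).  Replacing each logarithm by its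
   tangent bound ln z <= z - 1, the choice d = 2^(k-1) k ln 2 makes the constant ln 2 cancel
   against the linear terms, leaving ln 2 times the second-order remainder
   1 - (1-e)^k - k e (1-e)^(k-1) <= k(k-1) e^2/2, minus e, plus O(e^2).  Since
   k(k-1) <= 3 * 2^(k-2) for k >= 4 and e <= 2^(1-k), the remainder is at most 3e/4 and the
   O(e^2) terms are at most e/4; strictness comes from ln(1 - 2x^k) < -2x^k. *)

Lemma pow_le_1 (x : R) (n : nat) : 0 <= x <= 1 -> x ^ n <= 1.
Proof. intro hx. rewrite <- (pow1 n). exact (pow_incr x 1 n hx). Qed.

Lemma ln_le_sub_1 (z : R) : 0 < z -> ln z <= z - 1.
Proof.
  intro z_gt0. pose proof (exp_ineq1_le (ln z)) as H.
  rewrite exp_ln in H; lra.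
Qed.

Lemma ln_lt_sub_1 (z : R) : 0 < z -> z <> 1 -> ln z < z - 1.
Proof.
  intros z_gt0 z_neq1.
  pose proof (exp_ineq1 (ln z) (ln_neq_0 z z_neq1 z_gt0)) as H.
  rewrite exp_ln in H; lra.
Qed.

Lemma ln_1_plus_ge (e : R) : 0 <= e -> e - e ^ 2 <= ln (1 + e).
Proof.
  intro e_ge0.
  assert (inv_le : / (1 + e) - 1 <= e ^ 2 - e).
  { apply (Rmult_le_reg_r (1 + e)); [lra|].
    replace ((/ (1 + e) - 1) * (1 + e)) with (- e) by (field; lra). nra. }
  pose proof (ln_le_sub_1 (/ (1 + e)) ltac:(apply Rinv_0_lt_compat; lra)) as H.
  rewrite ln_Rinv in H; lra.
Qed.

Lemma ln_1_sub_sub_le (a b : R) : 0 <= b <= a -> a < 1 -> ln (1 - a) - ln (1 - b) <= b - a.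
Proof.
  intros [b_ge0 b_le_a] a_lt1.
  rewrite <- ln_div by lra.
  assert (ratio_le : (1 - a) / (1 - b) - 1 <= b - a).
  { apply (Rmult_le_reg_r (1 - b)); [lra|].
    replace (((1 - a) / (1 - b) - 1) * (1 - b)) with (b - a) by (field; lra). nra. }
  pose proof (ln_le_sub_1 ((1 - a) / (1 - b)) ltac:(apply Rdiv_lt_0_compat; lra)).
  lra.
Qed.

Lemma pow_1_sub_second_order (n : nat) (e : R) : 0 <= e <= 1 ->
  1 - (1 - e) ^ S n - INR (S n) * e * (1 - e) ^ n <= INR (S n) * INR n / 2 * e ^ 2.
Proof.
  intros [e_ge0 e_le1]. induction n as [|n IH]; [simpl; lra|].
  assert (pow_le1 : (1 - e) ^ n <= 1) by (apply pow_le_1; lra).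
  assert (pow_ge0 : 0 <= (1 - e) ^ n) by (apply pow_le; lra).
  assert (step : 1 - (1 - e) ^ S (S n) - INR (S (S n)) * e * (1 - e) ^ S n
    = (1 - (1 - e) ^ S n - INR (S n) * e * (1 - e) ^ n) + INR (S n) * e ^ 2 * (1 - e) ^ n).
  { rewrite !S_INR. simpl. ring. }
  rewrite step. rewrite !S_INR in *.
  pose proof (pos_INR n).
  assert (new_term : (INR n + 1) * e ^ 2 * (1 - e) ^ n <= (INR n + 1) * e ^ 2 * 1)
    by (apply Rmult_le_compat_l; nra).
  nra.
Qed.

Lemma succ_mul_le_pow2 (n : nat) : (3 <= n)%nat -> 2 * INR (S n) * INR n <= 3 * 2 ^ n.
Proof.
  induction 1 as [|m m_ge3 IH]; [simpl; lra|].
  assert (3 <= INR m) by (replace 3 with (INR 3) by (simpl; lra); apply le_INR; lia).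
  rewrite !S_INR in *. simpl. nra.
Qed.

Section PhiNearHalf.

Variable n : nat.
Variable e : R.

Let P := 2 ^ n.
Let L := ln 2.
Let a := (1 - e) ^ n / P.
Let b := (1 - e) ^ S n / P.

Let L_gt_half : / 2 < L.
Proof. exact ln_lt_2. Qed.

Lemma Phi_at_half_sub_eq : -1 < e ->
  Phi (S n) (P * INR (S n) * L) ((1 - e) / 2)
  = L - ln (1 + e) + (P * INR (S n) * L - 1) * (ln (1 - a) - ln (1 - b)) + P * L * ln (1 - b).
Proof.
  intro e_gt_m1.
  assert (P_gt0 : 0 < P) by (apply pow_lt; lra).
  assert (L_gt0 : 0 < L) by lra.
  assert (k_gt0 : 0 < INR (S n)) by (apply lt_0_INR; lia).
  assert (x_pow : ((1 - e) / 2) ^ n = a)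
    by (unfold a, P, Rdiv; rewrite Rpow_mult_distr, pow_inv; reflexivity).
  assert (two_x_pow : 2 * ((1 - e) / 2) ^ S n = b)
    by (unfold b; simpl; rewrite x_pow; unfold a; field; lra).
  assert (ln_1_sub_x : ln (1 - (1 - e) / 2) = ln (1 + e) - L).
  { replace (1 - (1 - e) / 2) with ((1 + e) / 2) by field. rewrite ln_div by lra. reflexivity. }
  unfold Phi. replace (S n - 1)%nat with n by lia.
  rewrite two_x_pow, x_pow, ln_1_sub_x.
  replace (P * INR (S n) * L * (1 - / INR (S n) - / (P * INR (S n) * L)))
    with (P * INR (S n) * L - P * L - 1) by (field; repeat split; lra).
  ring.
Qed.

Hypothesis n_ge3 : (3 <= n)%nat.
Hypothesis e_ge0 : 0 <= e.
Hypothesis e_le : e <= / P.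

Let P_ge8 : 8 <= P.
Proof. unfold P. replace 8 with (2 ^ 3) by (simpl; lra). apply Rle_pow; [lra | exact n_ge3]. Qed.

Let e_le_1_8 : e <= 1 / 8.
Proof. assert (/ P <= / 8) by (apply Rinv_le_contravar; lra). lra. Qed.

Lemma Phi_at_half_sub_lt :
  Phi (S n) (P * INR (S n) * L) ((1 - e) / 2)
  < L * (1 - (1 - e) ^ S n - INR (S n) * e * (1 - e) ^ n) - e + e ^ 2 + (1 - e) ^ n * e / P.
Proof.
  assert (k_ge4 : 4 <= INR (S n))
    by (replace 4 with (INR 4) by (simpl; lra); apply le_INR; lia).
  assert (pow_gt0 : 0 < (1 - e) ^ n) by (apply pow_lt; lra).
  assert (pow_le1 : (1 - e) ^ n <= 1) by (apply pow_le_1; lra).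
  assert (a_lt1 : a < 1).
  { unfold a. apply (Rmult_lt_reg_r P); [lra|]. unfold Rdiv. rewrite Rmult_assoc, Rinv_l; lra. }
  assert (b_gt0 : 0 < b) by (unfold b; apply Rdiv_lt_0_compat; [apply pow_lt|]; lra).
  assert (a_sub_b : a - b = (1 - e) ^ n * e / P) by (unfold a, b; simpl; field; lra).
  assert (b_le_a : b <= a).
  { assert (0 <= (1 - e) ^ n * e / P) by (apply Rdiv_le_0_compat; nra). lra. }
  assert (d_ge1 : 1 <= P * INR (S n) * L).
  { assert (32 <= P * INR (S n)) by nra. nra. }
  assert (ln_a_b : (P * INR (S n) * L - 1) * (ln (1 - a) - ln (1 - b))
                   <= (P * INR (S n) * L - 1) * (b - a)).
  { apply Rmult_le_compat_l; [lra|]. apply ln_1_sub_sub_le; lra. }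
  assert (ln_b : P * L * ln (1 - b) < P * L * (- b)).
  { apply Rmult_lt_compat_l; [nra|]. pose proof (ln_lt_sub_1 (1 - b)). lra. }
  (* with d = P k L the first-order terms cancel exactly: (d - 1)(a - b) + P L b *)
  assert (cancel : (P * INR (S n) * L - 1) * (a - b) + P * L * b
    = L * (INR (S n) * e * (1 - e) ^ n + (1 - e) ^ S n) - (1 - e) ^ n * e / P)
    by (rewrite a_sub_b; unfold b; simpl; field; lra).
  rewrite Phi_at_half_sub_eq by lra.
  pose proof (ln_1_plus_ge e e_ge0).
  lra.
Qed.

Lemma binomial_remainder_le : 1 - (1 - e) ^ S n - INR (S n) * e * (1 - e) ^ n <= 3 / 4 * e.
Proof.
  eapply Rle_trans; [apply pow_1_sub_second_order; lra|].
  assert (kn_ge0 : 0 <= INR (S n) * INR n) by (apply Rmult_le_pos; apply pos_INR).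
  pose proof (succ_mul_le_pow2 n n_ge3) as kn_le. fold P in kn_le.
  assert (P * e <= 1).
  { apply (Rmult_le_reg_r (/ P)); [apply Rinv_0_lt_compat; lra|].
    replace (P * e * / P) with e by (field; lra). lra. }
  nra.
Qed.

Lemma Phi_at_half_sub_neg : Phi (S n) (P * INR (S n) * L) ((1 - e) / 2) < 0.
Proof.
  assert (L_le1 : L <= 1) by (unfold L; pose proof (ln_le_sub_1 2); lra).
  assert (pow_le1 : (1 - e) ^ n <= 1) by (apply pow_le_1; lra).
  assert ((1 - e) ^ n * e / P <= e / 8).
  { apply (Rmult_le_reg_r P); [lra|].
    replace ((1 - e) ^ n * e / P * P) with ((1 - e) ^ n * e) by (field; lra). nra. }
  pose proof binomial_remainder_le.
  pose proof Phi_at_half_sub_lt.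
  nra.
Qed.

End PhiNearHalf.

Theorem lemma3p6 (k : nat) (hk : (4 <= k)%nat) (x : R)
  (hx1 : 1/2 - 1 / 2 ^ k <= x) (hx2 : x <= 1/2) :
  Phi k (2 ^ (k - 1) * INR k * ln 2) x < 0.
Proof.
  destruct k as [|n]; [lia|].
  replace (S n - 1)%nat with n by lia.
  assert (P_gt0 : 0 < 2 ^ n) by (apply pow_lt; lra).
  replace x with ((1 - (1 - 2 * x)) / 2) by field.
  apply Phi_at_half_sub_neg; [lia | lra |].
  replace (2 ^ S n) with (2 * 2 ^ n) in hx1 by reflexivity.
  replace (1 / (2 * 2 ^ n)) with (/ 2 ^ n / 2) in hx1 by (field; lra).
  lra.
Qed.
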